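(* Let $\Delta$ be an irreducible reduced root system with set of positive roots $\Delta^+$, and let $\eta_1,\eta_2\in\Delta^+$. Partially order $\Delta^+$ by $\mu\preccurlyeq\nu$ iff $\nu-\mu$ is a non-negative integral linear combination of simple roots, and denote by $\eta_1\vee\eta_2$ the least upper bound of $\eta_1,\eta_2$ in $(\Delta^+,\preccurlyeq)$ (which always exists), and by $\eta_1\wedge\eta_2$ their greatest lower bound in $(\Delta^+,\preccurlyeq)$ when it exists. (i) If $\eta_1\vee\eta_2$ covers both $\eta_1$ and $\eta_2$, then either $\eta_1\vee\eta_2=\alpha+\beta=\eta_1+\eta_2$ for some simple roots $\alpha,\beta$ that are adjacent in the Dynkin diagram, or $\eta_1\wedge\eta_2$ exists and $\eta_1$ and $\eta_2$ both cover $\eta_1\wedge\eta_2$. (ii) If $\eta_1\wedge\eta_2$ exists and $\eta_1$ and $\eta_2$ both cover $\eta_1\wedge\eta_2$, then $\eta_1\vee\eta_2$ covers both $\eta_1$ and $\eta_2$.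
   Context: ''$x$ covers $y$'' means $y\prec x$ and there is no $z$ with $y\prec z\prec x$ in $(\Delta^+,\preccurlyeq)$. The greatest lower bound (meet) $\nu=\eta_1\wedge\eta_2$, if it exists, is a positive root with $\eta_1\succcurlyeq\nu$, $\eta_2\succcurlyeq\nu$, and such that $\eta_1\succcurlyeq\kappa$, $\eta_2\succcurlyeq\kappa$ imply $\nu\succcurlyeq\kappa$ for every $\kappa\in\Delta^+$. *)

From HB Require Import structures.
From mathcomp Require Import all_boot all_order all_algebra.
From mathcomp Require Import reals.
Set Implicit Arguments. Unset Strict Implicit. Unset Printing Implicit Defensive.
Import Order.TTheory GRing.Theory Num.Theory.
Local Open Scope ring_scope.

Section RootSystems.
Variables (R : realType) (n : nat).
Implicit Types (Phi : seq 'rV[R]_n) (simple : 'I_n -> 'rV[R]_n).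

Definition dot (u v : 'rV[R]_n) : R := (u *m v^T) 0 0.

Definition cartan (b a : 'rV[R]_n) : R := 2 * dot b a / dot a a.

Definition reduced_root_system Phi : Prop :=
  uniq Phi /\
  [/\ 0 \notin Phi,
      (forall v : 'rV[R]_n, exists c : 'I_(size Phi) -> R,
          v = \sum_(i < size Phi) c i *: Phi`_i),
      (forall a b, a \in Phi -> b \in Phi -> b - cartan b a *: a \in Phi),
      (forall a b, a \in Phi -> b \in Phi -> exists z : int, cartan b a = z%:~R)
    & (forall a (c : R), a \in Phi -> c *: a \in Phi -> c = 1 \/ c = -1)].

Definition irreducible_rs Phi : Prop :=
  forall P : pred 'rV[R]_n,
    (exists2 a, a \in Phi & P a) -> (exists2 b, b \in Phi & ~~ P b) ->
    exists a b, [/\ a \in Phi, b \in Phi, P a, ~~ P b & dot a b != 0].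

Definition is_base Phi simple : Prop :=
  [/\ forall i, simple i \in Phi,
      (forall c : 'I_n -> R, \sum_i c i *: simple i = 0 -> forall i, c i = 0)
    & (forall b, b \in Phi -> exists c : 'I_n -> int,
          b = \sum_i (c i)%:~R *: simple i /\
          ((forall i, 0 <= c i) \/ (forall i, c i <= 0)))].

Definition nonneg_comb simple (v : 'rV[R]_n) : Prop :=
  exists c : 'I_n -> nat, v = \sum_i (c i)%:R *: simple i.

Definition pos_root Phi simple (b : 'rV[R]_n) : Prop :=
  b \in Phi /\ nonneg_comb simple b.

Definition rle simple (mu nu : 'rV[R]_n) : Prop := nonneg_comb simple (nu - mu).
Definition rlt simple (mu nu : 'rV[R]_n) : Prop := rle simple mu nu /\ mu <> nu.

Definition covers Phi simple (x y : 'rV[R]_n) : Prop :=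
  [/\ pos_root Phi simple x, pos_root Phi simple y, rlt simple y x
    & ~ exists z, [/\ pos_root Phi simple z, rlt simple y z & rlt simple z x]].

Definition is_join Phi simple (e1 e2 j : 'rV[R]_n) : Prop :=
  [/\ pos_root Phi simple j, rle simple e1 j, rle simple e2 j
    & forall k, pos_root Phi simple k -> rle simple e1 k -> rle simple e2 k ->
        rle simple j k].

Definition is_meet Phi simple (e1 e2 m : 'rV[R]_n) : Prop :=
  [/\ pos_root Phi simple m, rle simple m e1, rle simple m e2
    & forall k, pos_root Phi simple k -> rle simple k e1 -> rle simple k e2 ->
        rle simple k m].

Definition adjacent simple (i k : 'I_n) : Prop :=
  i != k /\ dot (simple i) (simple k) != 0.

End RootSystems.

(* A positive root x covers y exactly when x - y is a simple root: if the nonnegative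
   combination x - y = sum_i c_i s_i is nonzero, then (x - y, x - y) > 0 yields an i with
   c_i > 0 and (s_i, x - y) > 0, so x - s_i or y + s_i is a root lying between y and x.
   Hence j = eta1 + s_i = eta2 + s_k in (i), and eta1 = m + s_i, eta2 = m + s_k in (ii),
   with i <> k.  Both parts then rest on one fact about roots: if j - a and j - b are
   roots, (a, b) <= 0, a - b is not a root and j is neither 0 nor a + b, then j - a - b
   is a root; it is applied to j in (i) and to -m in (ii).  Linear independence of the
   simple roots makes the resulting m and j the meet and the join. *)

From HB Require Import structures.
From mathcomp Require Import all_boot all_order all_algebra.
From mathcomp Require Import reals.
From mathcomp Require Import lra zify.
Set Implicit Arguments. Unset Strict Implicit.
Import Order.TTheory GRing.Theory Num.Theory.
Local Open Scope ring_scope.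

Section Dot.
Variables (R : realType) (n : nat).
Implicit Types (u v w : 'rV[R]_n).

Lemma dotC u v : dot u v = dot v u.
Proof. by rewrite /dot -[u *m _]trmxK trmx_mul trmxK mxE. Qed.

Lemma dotDl u v w : dot (u + v) w = dot u w + dot v w.
Proof. by rewrite /dot mulmxDl mxE. Qed.

Lemma dotNl u w : dot (- u) w = - dot u w.
Proof. by rewrite /dot mulNmx mxE. Qed.

Lemma dotZl (c : R) u w : dot (c *: u) w = c * dot u w.
Proof. by rewrite /dot -scalemxAl mxE. Qed.

Lemma dotDr u v w : dot w (u + v) = dot w u + dot w v.
Proof. by rewrite dotC dotDl !(dotC w). Qed.

Lemma dotNr u w : dot w (- u) = - dot w u.
Proof. by rewrite dotC dotNl dotC. Qed.

Lemma dot_suml (I : finType) (f : I -> 'rV[R]_n) w :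
  dot (\sum_i f i) w = \sum_i dot (f i) w.
Proof. by rewrite /dot mulmx_suml summxE. Qed.

Lemma dot_gt0 v : v != 0 -> 0 < dot v v.
Proof.
have dotE : dot v v = \sum_j v 0 j ^+ 2.
  by rewrite /dot mxE; apply: eq_bigr => j _; rewrite mxE expr2.
move=> v0; rewrite lt_def dotE sumr_ge0 ?andbT // => [|j _]; last exact: sqr_ge0.
apply: contra v0 => /eqP /psumr_eq0P v2_0; apply/eqP/rowP => j.
by apply/eqP; rewrite mxE -sqrf_eq0 v2_0 // => i _; apply: sqr_ge0.
Qed.

End Dot.

Section RootSystem.
Variables (R : realType) (n : nat) (Phi : seq 'rV[R]_n).
Hypothesis HPhi : reduced_root_system Phi.
Implicit Types (a b j : 'rV[R]_n).

Lemma root_neq0 a : a \in Phi -> a != 0.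
Proof. by case: HPhi => _ [Phi0 _ _ _ _]; apply: contraTneq => ->. Qed.

Lemma dot_root_gt0 a : a \in Phi -> 0 < dot a a.
Proof. by move/root_neq0/dot_gt0. Qed.

Lemma reflection_root a b : a \in Phi -> b \in Phi -> b - cartan b a *: a \in Phi.
Proof. by case: HPhi => _ [_ _ refl _ _]; apply: refl. Qed.

Lemma cartan_self a : a \in Phi -> cartan a a = 2.
Proof. by move/dot_root_gt0/lt0r_neq0 => a0; rewrite /cartan mulfK. Qed.

Lemma oppr_root a : a \in Phi -> - a \in Phi.
Proof.
move=> Pa; have := reflection_root Pa Pa.
by rewrite cartan_self // scaler_nat mulr2n opprD addNKr.
Qed.

Lemma cartan_int a b : a \in Phi -> b \in Phi -> exists z : int, cartan b a = z%:~R.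
Proof. by case: HPhi => _ [_ _ _ cartan_int _]; apply: cartan_int. Qed.

Lemma cartan_eq1_or_ge2 a b : a \in Phi -> b \in Phi -> 0 < dot a b ->
  cartan b a = 1 \/ 2 <= cartan b a.
Proof.
move=> Pa Pb ab_gt0; have [z cz] := cartan_int Pa Pb.
have : 0 < cartan b a by rewrite divr_gt0 ?dot_root_gt0 // mulr_gt0 // dotC.
rewrite cz ltr0z => z_gt0.
have [->|z_ge2] : z = 1 \/ 2 <= z by lia.
  by left.
by right; rewrite -(ler_int R) in z_ge2.
Qed.

(* If both Cartan integers are at least 2, then (a - b, a - b) <= 0, i.e. a = b. *)
Lemma root_subr a b : a \in Phi -> b \in Phi -> 0 < dot a b -> a != b -> a - b \in Phi.
Proof.
move=> Pa Pb ab_gt0 ab; have ba_gt0 : 0 < dot b a by rewrite dotC.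
have [ab1|ab2] := cartan_eq1_or_ge2 Pb Pa ba_gt0.
  by have := reflection_root Pb Pa; rewrite ab1 scale1r.
have [ba1|ba2] := cartan_eq1_or_ge2 Pa Pb ab_gt0.
  by have := oppr_root (reflection_root Pa Pb); rewrite ba1 scale1r opprB.
move: ab2 ba2; rewrite /cartan !ler_pdivlMr ?dot_root_gt0 // => ab2 ba2.
exfalso; have : 0 < dot (a - b) (a - b) by rewrite dot_gt0 // subr_eq0.
by rewrite (dotC b a) in ba2; rewrite !(dotDl, dotDr, dotNl, dotNr) (dotC b a); lra.
Qed.

Lemma root_addr a b : a \in Phi -> b \in Phi -> dot a b < 0 -> a != - b -> a + b \in Phi.
Proof.
move=> Pa Pb ab_lt0 ab; rewrite -[b]opprK.
by apply: root_subr; rewrite ?oppr_root // dotNr oppr_gt0.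
Qed.

Lemma root_subr_orthogonal a b : a \in Phi -> a + b \in Phi -> dot a b = 0 ->
  b - a \in Phi.
Proof.
move=> Pa Pab ab0; have := reflection_root Pa Pab.
have -> : cartan (a + b) a = 2.
  by rewrite /cartan dotDl (dotC b) ab0 addr0 mulfK // lt0r_neq0 ?dot_root_gt0.
by rewrite scaler_nat mulr2n opprD addrA addrAC subrr add0r.
Qed.

(* If neither (j - a, b) nor (j - b, a) is positive, then
   (j - a, j - b) >= (j, j) - (a, b) > 0 and b - a would be a root. *)
Lemma root_subr_square a b j : a \in Phi -> b \in Phi -> j - a \in Phi -> j - b \in Phi ->
  dot a b <= 0 -> a - b \notin Phi -> a != b -> j != 0 -> j != a + b ->
  j - a - b \in Phi.
Proof.
move=> Pa Pb Pja Pjb ab_le0 Nab ab j0 jab.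
have [jab_gt0|jab_le0] := ltrP 0 (dot (j - a) b).
  by apply: root_subr; rewrite // subr_eq addrC.
have [jba_gt0|jba_le0] := ltrP 0 (dot (j - b) a).
  by rewrite addrAC; apply: root_subr; rewrite // subr_eq.
have ba : b - a \in Phi.
  have -> : b - a = (j - a) - (j - b) by rewrite opprB [RHS]addrC addrA subrK.
  apply: root_subr; rewrite // ?(inj_eq (addrI j)) ?(inj_eq oppr_inj) //.
  move: jab_le0 jba_le0 (dot_gt0 j0).
  by rewrite !(dotDl, dotDr, dotNl, dotNr) (dotC b a) (dotC a j) ?(dotC b j); lra.
by move: Nab; rewrite -opprB oppr_root.
Qed.

End RootSystem.

Section Base.
Variables (R : realType) (n : nat) (Phi : seq 'rV[R]_n) (s : 'I_n -> 'rV[R]_n).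
Hypotheses (HPhi : reduced_root_system Phi) (Hs : is_base Phi s).
Implicit Types (u v x y z : 'rV[R]_n) (c d : 'I_n -> nat).

Lemma simple_root k : s k \in Phi.
Proof. by case: Hs. Qed.

Lemma simple_coef_inj (a b : 'I_n -> R) :
  \sum_i a i *: s i = \sum_i b i *: s i -> a =1 b.
Proof.
move=> /eqP; rewrite -subr_eq0 -sumrB => /eqP ab0 i; apply/eqP; rewrite -subr_eq0.
case: Hs => _ indep _; apply/eqP/(indep (fun i => a i - b i)).
by rewrite -[RHS]ab0; apply: eq_bigr => l _; rewrite scalerBl.
Qed.

Lemma simpleE k : s k = \sum_i (i == k)%:R *: s i.
Proof.
by rewrite (bigD1 k) //= eqxx scale1r big1 ?addr0 // => i /negPf ->; rewrite scale0r.
Qed.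

Lemma simple_inj : injective s.
Proof.
move=> k l skl; have := @simple_coef_inj (fun i => (i == k)%:R) (fun i => (i == l)%:R).
rewrite -!simpleE skl => /(_ erefl k) /=; rewrite eqxx.
by case: eqP => // _ /eqP; rewrite eqr_nat.
Qed.

Lemma subr_simple_notin i k : i != k -> s i - s k \notin Phi.
Proof.
move=> ik; apply/negP => Pik; case: Hs => _ _ /(_ _ Pik) [z [Ez sign_z]].
have coef_z : forall l, (l == i)%:R - (l == k)%:R = (z l)%:~R :> R.
  apply: simple_coef_inj; rewrite -Ez [s i]simpleE [s k]simpleE -sumrB.
  by apply: eq_bigr => l _; rewrite scalerBl.
have := coef_z i; have := coef_z k; rewrite !eqxx eq_sym (negPf ik) subr0 sub0r.
case: sign_z => [/(_ k)|/(_ i)] zs zk zi.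
  by move: zs; rewrite -(ler_int R) -zk lerNr oppr0 ler10.
by move: zs; rewrite -(ler_int R) -zi ler10.
Qed.

Lemma dot_simple_le0 i k : i != k -> dot (s i) (s k) <= 0.
Proof.
move=> ik; rewrite leNgt; apply: contraNN (subr_simple_notin ik) => ik_gt0.
by apply: root_subr; rewrite ?simple_root // (inj_eq simple_inj).
Qed.

Lemma root_subr_simples i k j : i != k -> j - s i \in Phi -> j - s k \in Phi ->
  j != 0 -> j != s i + s k -> j - s i - s k \in Phi.
Proof.
move=> ik Pji Pjk j0 j_neq.
apply: (root_subr_square HPhi); rewrite ?simple_root ?dot_simple_le0 //.
  exact: subr_simple_notin.
by rewrite (inj_eq simple_inj).
Qed.

Lemma simple_neq0 k : s k != 0.
Proof. by rewrite (root_neq0 HPhi) ?simple_root. Qed.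

Let natcomb c := \sum_i (c i)%:R *: s i.

Lemma natcombD c d : natcomb (fun i => c i + d i)%N = natcomb c + natcomb d.
Proof. by rewrite -big_split; apply: eq_bigr => i _; rewrite natrD scalerDl. Qed.

Lemma natcomb_inj c d : natcomb c = natcomb d -> c =1 d.
Proof. by move=> /simple_coef_inj cd i; apply/eqP; rewrite -(eqr_nat R) cd. Qed.

Lemma natcomb_eq0 c : c =1 (fun _ => 0%N) -> natcomb c = 0.
Proof. by move=> c0; rewrite /natcomb big1 // => i _; rewrite c0 scale0r. Qed.

Lemma natcomb_simple k : natcomb (fun i => i == k : nat) = s k.
Proof. by rewrite [RHS]simpleE. Qed.

Lemma natcomb_subr_simple c k : (0 < c k)%N ->
  natcomb c - s k = natcomb (fun i => c i - (i == k))%N.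
Proof.
move=> ck_gt0; apply: (canLR (addrK _)); rewrite -natcomb_simple -natcombD.
by apply: eq_bigr => i _; case: eqP => [->|]; rewrite ?subnK ?subn0 ?addn0.
Qed.

Lemma nonneg_combP v : nonneg_comb s v <-> exists c, v = natcomb c.
Proof. by []. Qed.

Lemma nonneg_comb0 : nonneg_comb s 0.
Proof. by apply/nonneg_combP; exists (fun _ => 0%N); rewrite natcomb_eq0. Qed.

Lemma nonneg_combD u v : nonneg_comb s u -> nonneg_comb s v -> nonneg_comb s (u + v).
Proof.
move=> /nonneg_combP [c ->] /nonneg_combP [d ->]; apply/nonneg_combP.
by exists (fun i => c i + d i)%N; rewrite natcombD.
Qed.

Lemma nonneg_comb_simple k : nonneg_comb s (s k).
Proof. by apply/nonneg_combP; exists (fun i => i == k : nat); rewrite natcomb_simple. Qed.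

Lemma nonneg_comb_opp_eq0 v : nonneg_comb s v -> nonneg_comb s (- v) -> v = 0.
Proof.
move=> /nonneg_combP [c ->] /nonneg_combP [d Ed]; apply: natcomb_eq0 => i.
have /natcomb_inj/(_ i) : natcomb (fun i => c i + d i)%N = natcomb (fun _ => 0%N).
  by rewrite natcombD -Ed subrr natcomb_eq0.
by move/eqP; rewrite addn_eq0 => /andP [/eqP].
Qed.

Lemma nonneg_comb_addr_simples v i k : i != k ->
  nonneg_comb s (v + s i) -> nonneg_comb s (v + s k) -> nonneg_comb s v.
Proof.
move=> ik /nonneg_combP [c Ec] /nonneg_combP [d Ed]; apply/nonneg_combP.
have /natcomb_inj /(_ k) : natcomb (fun l => c l + (l == k))%N =
                            natcomb (fun l => d l + (l == i))%N.
  by rewrite !natcombD !natcomb_simple -Ec -Ed addrAC.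
rewrite eqxx eq_sym (negPf ik) addn0 => dk.
have dk_gt0 : (0 < d k)%N by rewrite -dk addn1.
by exists (fun l => d l - (l == k))%N; rewrite -natcomb_subr_simple // -Ed addrK.
Qed.

Lemma nonneg_comb_split_simple u v k : nonneg_comb s u -> nonneg_comb s v ->
  u + v = s k -> u = 0 \/ v = 0.
Proof.
move=> /nonneg_combP [c ->] /nonneg_combP [d ->].
rewrite -natcombD -natcomb_simple => /natcomb_inj cd.
have zero_off_k l : l != k -> c l = 0%N /\ d l = 0%N.
  by move=> lk; move: (cd l); rewrite (negPf lk); lia.
have [ck0|ck_gt0] := posnP (c k); [left|right]; apply: natcomb_eq0 => l.
  by have [->//|/zero_off_k []] := eqVneq l k.
have [->|/zero_off_k [] //] := eqVneq l k.
by move: (cd k); rewrite eqxx; lia.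
Qed.

Lemma addr_simple_neq x k : x + s k <> x.
Proof. by rewrite -[RHS]addr0 => /addrI /eqP; rewrite (negPf (simple_neq0 k)). Qed.

Lemma nonneg_comb_dot_simple_gt0 v : nonneg_comb s v -> v != 0 ->
  exists i, 0 < dot (s i) v /\ nonneg_comb s (v - s i).
Proof.
move=> /nonneg_combP [c Ev] v0.
have : ~~ [forall i, (c i)%:R * dot (s i) v <= 0].
  apply: contraTN (dot_gt0 v0) => /forallP le0; rewrite -leNgt {1}Ev /natcomb dot_suml.
  by apply: sumr_le0 => i _; rewrite dotZl.
case/forallPn => i; rewrite -ltNge => ci_dot.
have ci_gt0 : (0 < c i)%N by move: ci_dot; case: (c i) => //; rewrite mul0r ltxx.
exists i; split; first by move: ci_dot; rewrite pmulr_rgt0 // ltr0n.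
apply/nonneg_combP; exists (fun l => c l - (l == i))%N.
by rewrite -natcomb_subr_simple // Ev.
Qed.

Lemma rle_refl x : rle s x x.
Proof. by rewrite /rle subrr; apply: nonneg_comb0. Qed.

Lemma rle_addr_simple x k : rle s x (x + s k).
Proof. by rewrite /rle addrAC subrr add0r; apply: nonneg_comb_simple. Qed.

Lemma not_rle_addr_simple x k : ~ rle s (x + s k) x.
Proof.
rewrite /rle opprD addrA subrr add0r => /(nonneg_comb_opp_eq0 (nonneg_comb_simple k)).
exact/eqP/simple_neq0.
Qed.

Lemma pos_root_addr_simple y k : pos_root Phi s y -> y + s k \in Phi ->
  pos_root Phi s (y + s k).
Proof. by move=> [_ ny] Pyk; split; last exact: nonneg_combD ny (nonneg_comb_simple k). Qed.

Lemma covers_between x y z : covers Phi s x y -> pos_root Phi s z ->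
  rle s y z -> rle s z x -> z = y \/ z = x.
Proof.
move=> [_ _ _ no_mid] Pz yz zx; have [->|zy] := eqVneq z y; [by left | right].
have [//|zx'] := eqVneq z x; case: no_mid; exists z.
by split=> //; split=> //; apply/eqP; rewrite // eq_sym.
Qed.

Lemma covers_addr_simple y k : pos_root Phi s y -> pos_root Phi s (y + s k) ->
  covers Phi s (y + s k) y.
Proof.
move=> Py Pyk; split=> //.
  by split; [apply: rle_addr_simple | move/esym/addr_simple_neq].
move=> [z [_ [yz /eqP zy] [zx /eqP zx']]].
have [] := nonneg_comb_split_simple yz zx (_ : _ = s k).
- by rewrite addrC -addrA addKr addrAC subrr add0r.
- by move/eqP; rewrite subr_eq0 eq_sym (negPf zy).
- by move/eqP; rewrite subr_eq0 eq_sym (negPf zx').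
Qed.

Lemma covers_exists_simple x y : covers Phi s x y -> exists k, x = y + s k.
Proof.
move=> cov; have [[Px _] [Py ny] [yx /eqP yx_neq] _] := cov.
have xy0 : x - y != 0 by rewrite subr_eq0 eq_sym.
have [i [dot_gt0 xyi]] := nonneg_comb_dot_simple_gt0 yx xy0.
have y_xi : rle s y (x - s i) by rewrite /rle addrAC.
exists i; move: dot_gt0; rewrite dotDr dotNr subr_gt0.
have [xi_gt0 _|xi_le0 /lt_le_trans /(_ xi_le0) yi_lt0] := ltrP 0 (dot (s i) x).
  have xsi : x != s i.
    apply: contraPneq y_xi => ->; rewrite /rle subrr sub0r => /(nonneg_comb_opp_eq0 ny).
    exact/eqP/(root_neq0 HPhi).
  have Pxi : pos_root Phi s (x - s i).
    split; first by apply: root_subr; rewrite ?simple_root // dotC.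
    by rewrite -(subrK y (x - s i)) addrC; apply: nonneg_combD.
  have xi_x : rle s (x - s i) x.
    by rewrite /rle opprB addrC subrK; apply: nonneg_comb_simple.
  have [<-|/eqP] := covers_between cov Pxi y_xi xi_x; first by rewrite subrK.
  by rewrite subr_eq addrC -subr_eq subrr eq_sym (negPf (simple_neq0 i)).
have Pyi : pos_root Phi s (y + s i).
  apply: pos_root_addr_simple => //; apply: root_addr; rewrite ?simple_root 1?dotC //.
  apply/eqP => yi; move: ny; rewrite yi => /(nonneg_comb_opp_eq0 (nonneg_comb_simple i)).
  exact/eqP/simple_neq0.
have yi_x : rle s (y + s i) x by rewrite /rle opprD addrA.
by have [/addr_simple_neq|<-] := covers_between cov Pyi (rle_addr_simple y i) yi_x.
Qed.

Lemma coversP x y : covers Phi s x y <->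
  [/\ pos_root Phi s x, pos_root Phi s y & exists k, x = y + s k].
Proof.
split=> [cov|[Px Py [k xE]]]; last by move: Px; rewrite xE; apply: covers_addr_simple.
by have [Px Py _ _] := cov; split=> //; apply: covers_exists_simple.
Qed.

Lemma is_meet_addr_simples m i k : i != k -> pos_root Phi s m ->
  is_meet Phi s (m + s i) (m + s k) m.
Proof.
move=> ik Pm; split=> //; [exact: rle_addr_simple | exact: rle_addr_simple |].
move=> c _; rewrite /rle (addrAC m (s i)) (addrAC m (s k)).
exact: nonneg_comb_addr_simples.
Qed.

Lemma is_join_addr_simples m i k : i != k -> pos_root Phi s (m + s i + s k) ->
  is_join Phi s (m + s i) (m + s k) (m + s i + s k).
Proof.
move=> ik Pj; split=> [|||c _ ci ck] //; first exact: rle_addr_simple.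
  by rewrite (addrAC m); apply: rle_addr_simple.
apply: (@nonneg_comb_addr_simples _ k i); first by rewrite eq_sym.
  by rewrite opprD addrA subrK.
by rewrite (addrAC m) opprD addrA subrK.
Qed.

Lemma join_covers_both eta1 eta2 j :
  pos_root Phi s eta1 -> pos_root Phi s eta2 -> is_join Phi s eta1 eta2 j ->
  covers Phi s j eta1 -> covers Phi s j eta2 ->
  (exists i k, [/\ adjacent s i k, j = s i + s k & j = eta1 + eta2])
  \/ (exists m, [/\ is_meet Phi s eta1 eta2 m, covers Phi s eta1 m
                  & covers Phi s eta2 m]).
Proof.
move=> P1 P2 [Pj _ _ j_least] /coversP [_ _ [i j1]] /coversP [_ _ [k j2]].
have ik : i != k.
  apply/eqP => ik; have e12 : eta1 = eta2 by apply: (addIr (s k)); rewrite -j2 -ik -j1.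
  apply: (@not_rle_addr_simple eta1 i); rewrite -j1.
  by apply: j_least; rewrite -?e12 //; apply: rle_refl.
have ki : k != i by rewrite eq_sym.
have [jE|j_neq] := eqVneq j (s i + s k).
  left; exists i, k; split=> //.
    split=> //; apply: contraNneq (subr_simple_notin ki) => ik0.
    by apply: (root_subr_orthogonal HPhi (simple_root i)); rewrite // -jE; case: Pj.
  have e1 : eta1 = s k by apply: (addIr (s i)); rewrite -j1 jE addrC.
  have e2 : eta2 = s i by apply: (addIr (s k)); rewrite -j2 jE.
  by rewrite e1 e2 addrC.
right; have Pm : j - s i - s k \in Phi.
  apply: root_subr_simples => //.
  - by rewrite j1 addrK; case: P1.
  - by rewrite j2 addrK; case: P2.
  - by case: Pj => /(root_neq0 HPhi).
set m := j - s i - s k.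
have e1 : eta1 = m + s k by rewrite /m j1 addrK subrK.
have e2 : eta2 = m + s i by apply: (addIr (s k)); rewrite -j2 j1 e1 addrAC.
have Pm_pos : pos_root Phi s m.
  split=> //; apply: (nonneg_comb_addr_simples ik).
    by rewrite -e2; case: P2.
  by rewrite -e1; case: P1.
exists m; rewrite e1 e2; split.
- exact: is_meet_addr_simples.
- by apply/coversP; split; [rewrite -e1 | | exists k].
- by apply/coversP; split; [rewrite -e2 | | exists i].
Qed.

Lemma meet_covered_by_both eta1 eta2 m :
  pos_root Phi s eta1 -> pos_root Phi s eta2 -> is_meet Phi s eta1 eta2 m ->
  covers Phi s eta1 m -> covers Phi s eta2 m ->
  exists j, [/\ is_join Phi s eta1 eta2 j, covers Phi s j eta1 & covers Phi s j eta2].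
Proof.
move=> P1 P2 [Pm _ _ m_greatest] /coversP [_ _ [i e1]] /coversP [_ _ [k e2]].
have ik : i != k.
  apply/eqP => ik; apply: (@not_rle_addr_simple m i); rewrite -e1.
  by apply: m_greatest; rewrite // ?e2 -?ik -?e1; apply: rle_refl.
have Pj : m + s i + s k \in Phi.
  suff : - m - s i - s k \in Phi by move/(oppr_root HPhi); rewrite !opprD !opprK.
  apply: root_subr_simples => //.
  - by rewrite -opprD -e1; apply: (oppr_root HPhi); case: P1.
  - by rewrite -opprD -e2; apply: (oppr_root HPhi); case: P2.
  - by rewrite oppr_eq0; case: Pm => /(root_neq0 HPhi).
  - apply/eqP => mE; have m0 : m = 0.
      apply: (nonneg_comb_opp_eq0 Pm.2); rewrite mE.
      by apply: nonneg_combD; apply: nonneg_comb_simple.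
    by case: Pm => /(root_neq0 HPhi); rewrite m0 eqxx.
exists (m + s i + s k); rewrite e1 e2.
have Pj_pos : pos_root Phi s (m + s i + s k).
  by apply: pos_root_addr_simple; rewrite // -e1.
split; first exact: is_join_addr_simples.
- by apply/coversP; split; [| rewrite -e1 | exists k].
- by apply/coversP; split; [| rewrite -e2 | exists i; rewrite addrAC].
Qed.

End Base.

Theorem proposition2p4 (R : realType) (n : nat) (Phi : seq 'rV[R]_n)
    (simple : 'I_n -> 'rV[R]_n) (eta1 eta2 : 'rV[R]_n) :
  reduced_root_system Phi -> irreducible_rs Phi -> is_base Phi simple ->
  pos_root Phi simple eta1 -> pos_root Phi simple eta2 ->
  (forall j, is_join Phi simple eta1 eta2 j ->
     covers Phi simple j eta1 -> covers Phi simple j eta2 ->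
     (exists i k, [/\ adjacent simple i k, j = simple i + simple k
                    & j = eta1 + eta2])
     \/ (exists m, [/\ is_meet Phi simple eta1 eta2 m,
                       covers Phi simple eta1 m & covers Phi simple eta2 m]))
  /\
  (forall m, is_meet Phi simple eta1 eta2 m ->
     covers Phi simple eta1 m -> covers Phi simple eta2 m ->
     exists j, [/\ is_join Phi simple eta1 eta2 j,
                   covers Phi simple j eta1 & covers Phi simple j eta2]).
Proof.
move=> HPhi _ Hs P1 P2; split=> [j|m].
  exact: join_covers_both.
exact: meet_covered_by_both.
Qed.
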